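(* Let $G$ be a simple graph on $n$ vertices and let $f$ be its associated quadratic Boolean function. Then for every graph $H$ in the LC orbit $[G]$, the Boolean function associated with $H$ has $\mathrm{PAR}_{IHN}=2^{\lambda(G)}$. In particular $\mathrm{PAR}_{IHN}(f)=2^{\lambda(G)}$.
   Context: All graphs are finite, simple and undirected, with vertex set $\{0,\dots,n-1\}$. The Boolean function associated with $G$ is $f(\boldsymbol{x})=\sum_{\{i,j\}\in E(G)} x_ix_j \pmod 2$, $\boldsymbol{x}\in\mathbb{Z}_2^n$. For $v\in V$ with neighbourhood $N_v$, the local complementation $G^v$ complements the subgraph induced on $N_v$; the LC orbit $[G]$ is the set of graphs obtainable from $G$ by finite sequences of local complementations. $\alpha(G)$ is the independence number and $\lambda(G)=\max_{H\in[G]}\alpha(H)$. Let $I=\begin{pmatrix}1&0\\0&1\end{pmatrix}$, $H=\frac1{\sqrt2}\begin{pmatrix}1&1\\1&-1\end{pmatrix}$, $N=\frac1{\sqrt2}\begin{pmatrix}1&i\\1&-i\end{pmatrix}$ with $i^2=-1$. For a Boolean function $f$ on $n$ variables, let $\boldsymbol{s}\in\mathbb{C}^{2^n}$ be the vector with entries $s_{\boldsymbol{x}}=2^{-n/2}(-1)^{f(\boldsymbol{x})}$ (indexed by $\boldsymbol{x}\in\mathbb{Z}_2^n$ in the standard order consistent with the Kronecker product). Then $\mathrm{PAR}_{IHN}(f)=2^n\max_{U}\max_{k}|(U\boldsymbol{s})_k|^2$, the maximum over all $3^n$ transforms $U=U_0\otimes\cdots\otimes U_{n-1}$ with each $U_j\in\{I,H,N\}$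 and over all coordinates $k\in\mathbb{Z}_{2^n}$. *)

From mathcomp Require Import all_boot all_order all_algebra all_field.
Set Implicit Arguments. Unset Strict Implicit. Unset Printing Implicit Defensive.
Import Order.TTheory GRing.Theory Num.Theory.
Local Open Scope ring_scope.

Definition graph (n : nat) := {ffun 'I_n * 'I_n -> bool}.

Definition simple_graph n (G : graph n) : Prop :=
  forall i j : 'I_n, G (i, i) = false /\ G (i, j) = G (j, i).

Definition lc n (G : graph n) (v : 'I_n) : graph n :=
  [ffun p : 'I_n * 'I_n =>
     if [&& p.1 != p.2, G (v, p.1) & G (v, p.2)] then ~~ G p else G p].

Definition lc_step n : rel (graph n) := fun G H => [exists v, H == lc G v].
Definition in_lc_orbit n (G H : graph n) : bool := connect (@lc_step n) G H.

Definition independent n (G : graph n) (S : {set 'I_n}) : bool :=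
  [forall i in S, forall j in S, ~~ G (i, j)].

Definition alpha n (G : graph n) : nat :=
  (\max_(S : {set 'I_n} | independent G S) #|S|)%N.

Definition lambda n (G : graph n) : nat :=
  (\max_(H : graph n | in_lc_orbit G H) alpha H)%N.

Definition bvec n := {ffun 'I_n -> bool}.

Definition bool_fun n (G : graph n) (x : bvec n) : bool :=
  \big[addb/false]_(i : 'I_n) \big[addb/false]_(j : 'I_n | (i < j)%N)
     [&& G (i, j), x i & x j].

(* The three 2x2 matrices, coded by 'I_3: 0 = I, 1 = H, 2 = N;
   entries indexed by bools (false = 0, true = 1), row then column. *)
Definition gate_entry (g : 'I_3) (r c : bool) : algC :=
  match nat_of_ord g with
  | 0%N => if r == c then 1 else 0
  | 1%N => (sqrtC 2)^-1 * (if r && c then -1 else 1)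
  | _ => (sqrtC 2)^-1 *
         (if c then (if r then - 'i else 'i) else 1)
  end.

Definition svec n (f : bvec n -> bool) (x : bvec n) : algC :=
  (sqrtC 2 ^+ n)^-1 * (-1) ^+ f x.

(* (U s)_k for U = U_0 (x) ... (x) U_{n-1}, Kronecker product written out *)
Definition transform n (f : bvec n -> bool) (U : {ffun 'I_n -> 'I_3})
    (k : bvec n) : algC :=
  \sum_(x : bvec n) (\prod_(j : 'I_n) gate_entry (U j) (k j) (x j)) * svec f x.

Definition PAR_IHN n (f : bvec n -> bool) : algC :=
  2 ^+ n * \big[Num.max/0]_(U : {ffun 'I_n -> 'I_3})
             \big[Num.max/0]_(k : bvec n) `|transform f U k| ^+ 2.

From mathcomp Require Import all_boot all_order all_algebra all_field.
From mathcomp Require Import ring.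
Import Order.TTheory GRing.Theory Num.Theory.
Set Implicit Arguments. Unset Strict Implicit. Unset Printing Implicit Defensive.
Local Open Scope ring_scope.

(* Expanding |(U s)_k|^2 as a double sum over x, y and substituting y = x + w,
   the quadratic form splits as f(x + w) = f(x) + f(w) + <x, Gamma w>, so that
   2^n |(U s)_k|^2 = sum_w (-1)^f(w) prod_j c_(U_j)(k_j; w_j, (Gamma w)_j), where
   c_u is the autocorrelation of the gate u.  Each factor c_u has modulus 0 or 1,
   and is nonzero exactly when (w_j, (Gamma w)_j) satisfies the linear constraint
   of u (w_j = 0 for I, (Gamma w)_j = 0 for H, (Gamma w)_j = w_j for N).  Hence
   these spectral values are nonnegative, bounded by the size of the set K_U of
   such w, and sum to 2^n while their squares sum to 2^n |K_U|: the maximum over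
   k is |K_U|, and PAR_IHN = max_U |K_U|.
   Local complementation at v corresponds to w |-> w + (Gamma w)_v e_v, which
   maps K_U bijectively onto K_U' for a modified U', so max_U |K_U| is an LC
   invariant.  An independent set S gives |K_U| = 2^|S| (H on S, I elsewhere);
   conversely |K_U| <= 2^|supp U|, and LC moves shrink supp U until it is
   independent in some graph of the orbit, so max_U |K_U| = 2^lambda. *)

Lemma bigmax_nonneg_eq (R : numDomainType) (I : finType) (F : I -> R) (c : R) :
  (forall i, 0 <= F i <= c) -> (exists i, F i = c) ->
  \big[Num.max/0]_(i : I) F i = c.
Proof.
move=> F_bnd [i0 Fi0]; subst c.
have F_ge0 i : 0 <= F i by case/andP: (F_bnd i).
have bnd r : 0 <= \big[Num.max/0]_(i <- r) F i <= F i0 /\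
             (i0 \in r -> F i0 <= \big[Num.max/0]_(i <- r) F i).
  elim: r => [|a r [/andP[M_ge0 M_le] IH]]; first by rewrite big_nil lexx F_ge0.
  rewrite big_cons in_cons.
  case: (real_leP (ger0_real (F_ge0 a)) (ger0_real M_ge0)) => [Fa_le | M_lt].
  - rewrite M_ge0 M_le; split=> // /orP[/eqP -> //|]; exact: IH.
  - rewrite F_bnd; split=> // /orP[/eqP -> //|/IH le_M].
    exact: le_trans le_M (ltW M_lt).
case: (bnd (index_enum I)) => /andP[_ le_max] /(_ (mem_index_enum i0)) ge_max.
by apply/le_anti; rewrite le_max ge_max.
Qed.

Lemma exists_eq_ub_of_moments (R : numDomainType) (I : finType) (F : I -> R) (c : R) :
  (forall i, 0 <= F i <= c) -> \sum_i F i != 0 ->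
  \sum_i F i ^+ 2 = c * \sum_i F i -> exists i, F i = c.
Proof.
move=> F_bnd sum_neq0 moment2.
have terms_ge0 i : 0 <= F i * (c - F i).
  by case/andP: (F_bnd i) => F_ge0 F_le; rewrite mulr_ge0 ?subr_ge0.
have sum0 : \sum_i F i * (c - F i) = 0.
  rewrite (eq_bigr (fun i => c * F i - F i ^+ 2)) => [|i _]; last by ring.
  by rewrite sumrB -mulr_sumr moment2 subrr.
have [i Fi_neq0|all0] := pickP (fun i => F i != 0); last first.
  by case/eqP: sum_neq0; apply: big1 => i _; apply/eqP/negbFE/all0.
exists i; have /eqP := psumr_eq0P (fun j _ => terms_ge0 j) sum0 (i := i) isT.
by rewrite mulf_eq0 (negbTE Fi_neq0) subr_eq0 => /eqP.
Qed.

Lemma conjCM (x y : algC) : (x * y)^* = x^* * y^*. Proof. exact: rmorphM. Qed.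
Lemma conjCN (x : algC) : (- x)^* = - x^*. Proof. exact: rmorphN. Qed.

Lemma prod_natr_bool (I : finType) (c : I -> bool) :
  \prod_(i : I) ((c i)%:R : algC) = ([forall i, c i])%:R.
Proof.
have [/forallP c_all|/forallPn[i /negbTE ci]] := boolP [forall i, c i].
  by rewrite big1 // => i _; rewrite c_all.
by rewrite (bigD1 i) //= ci mul0r.
Qed.

Lemma sum_natr_mem (T : finType) (A : {set T}) :
  \sum_(w : T) ((w \in A)%:R : algC) = #|A|%:R.
Proof.
rewrite (eq_bigr (fun w => if w \in A then 1 else 0)) => [|w _]; last by case: (w \in A).
by rewrite -big_mkcond sumr_const.
Qed.

Lemma big_lt_pairs (R : Type) (idx : R) (op : Monoid.com_law idx) n
    (a : 'I_n -> 'I_n -> R) : (forall i, a i i = idx) ->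
  \big[op/idx]_(i : 'I_n) \big[op/idx]_(j : 'I_n | (i < j)%N) op (a i j) (a j i)
  = \big[op/idx]_(i : 'I_n) \big[op/idx]_(j : 'I_n) a i j.
Proof.
move=> a_diag; rewrite (eq_bigr _ (fun i _ => big_split _ _ _ _ _)) big_split /=.
rewrite [X in op _ X](exchange_big_dep xpredT) //= -big_split /=.
apply: eq_bigr => i _; rewrite [RHS](bigID (fun j : 'I_n => (i < j)%N) xpredT) /=.
congr (op _ _); rewrite [RHS](bigD1 i) ?ltnn //= a_diag Monoid.mul1m.
by apply: eq_bigl => j; rewrite -leqNgt ltn_neqAle andbC.
Qed.

Lemma andb_big_addb (I : finType) (b : bool) (F : I -> bool) :
  b && \big[addb/false]_i F i = \big[addb/false]_i (b && F i).
Proof. by case: b => //=; rewrite big1. Qed.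

Lemma big_addb_neq (I : finType) (j : I) (F : I -> bool) :
  \big[addb/false]_i ((j != i) && F i) = \big[addb/false]_i F i (+) F j.
Proof.
rewrite (bigD1 j) //= eqxx /= [in RHS](bigD1 j) //= addbC addbA addbb /=.
by apply: eq_bigr => i ij; rewrite eq_sym ij.
Qed.

Definition gI : 'I_3 := @Ordinal 3 0 isT.
Definition gH : 'I_3 := @Ordinal 3 1 isT.
Definition gN : 'I_3 := @Ordinal 3 2 isT.

Lemma gateP (u : 'I_3) : [\/ u = gI, u = gH | u = gN].
Proof.
by case: u => [[|[|[|m]]] Hm] //; [apply: Or31 | apply: Or32 | apply: Or33]; apply/val_inj.
Qed.

Definition gate_corr (u : 'I_3) (r w t : bool) : algC :=
  match val u with
  | 0%N => if w then 0 else (-1) ^+ (r && t)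
  | 1%N => if t then 0 else (-1) ^+ (r && w)
  | _ => if t == w then (-1) ^+ (r && w) * (if w then - 'i else 1) else 0
  end.

Definition gate_stab (u : 'I_3) (w t : bool) : bool :=
  match val u with 0%N => ~~ w | 1%N => ~~ t | _ => t == w end.

Lemma gate_corrE u r w t :
  \sum_(b : bool) gate_entry u r b * (gate_entry u r (b (+) w))^* * (-1) ^+ (b && t)
  = gate_corr u r w t.
Proof.
set a : algC := (sqrtC 2)^-1.
have a_conj : a^* = a.
  by rewrite /a fmorphV; congr (_^-1); apply/CrealP; rewrite qualifE /= sqrtC_ge0 ler0n.
have a_sqr : a * a = 2^-1 by rewrite -invfM -expr2 sqrtCK.
have i_sqr : ('i : algC) * 'i = -1 by rewrite -expr2 sqrCi.
rewrite big_bool /gate_entry /gate_corr -/a.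
case: u => [[|[|[|m]]] Hm] //=; case: r; case: w; case: t => /=;
  rewrite ?conjCM ?conjCN ?conjC1 ?conjC0 ?conjCi ?a_conj ?expr0 ?expr1;
  rewrite ?mulr1 ?mul1r ?mulr0 ?mul0r ?addr0 ?add0r //;
  rewrite ?mulrN ?mulNr ?opprK ?mulr1 ?mulrA ?(mulrAC a 'i) ?a_sqr ?i_sqr;
  rewrite -?mulrA ?i_sqr; by field.
Qed.

Lemma norm_gate_corr u r w t : `|gate_corr u r w t| = (gate_stab u w t)%:R.
Proof.
rewrite /gate_corr /gate_stab.
case: u => [[|[|[|m]]] Hm] //=; case: r; case: w; case: t => /=;
  by rewrite ?normr0 ?normrMsign ?normr_sign ?normrN ?normCi ?normr1.
Qed.

Lemma sum_gate_corr u w t : \sum_(r : bool) gate_corr u r w t = 2 * (~~ w && ~~ t)%:R.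
Proof.
rewrite big_bool /gate_corr.
by case: u => [[|[|[|m]]] Hm] //=; case: w; case: t => /=; rewrite ?expr0 ?expr1; ring.
Qed.

Lemma gate_corr_orth u w t w' t' :
  \sum_(r : bool) gate_corr u r w t * (gate_corr u r w' t')^*
  = 2 * [&& w == w', t == t' & gate_stab u w t]%:R.
Proof.
have i_sqr : ('i : algC) * 'i = -1 by rewrite -expr2 sqrCi.
have i_conj : ('i : algC)^* = - 'i by exact: conjCi.
rewrite big_bool /gate_corr /gate_stab.
case: u => [[|[|[|m]]] Hm] //=; case: w; case: t; case: w'; case: t' => /=;
  rewrite ?expr0 ?expr1 ?conjCM ?conjCN ?conjC0 ?conjC1 ?i_conj;
  rewrite ?(mul1r, mulrN, mulNr, opprK, i_sqr); ring.
Qed.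

Definition addbv n (x w : bvec n) : bvec n := [ffun j => x j (+) w j].

Lemma addbv_inj n (x : bvec n) : injective (addbv x).
Proof.
move=> w w' /ffunP eq_xw; apply/ffunP => j.
by move: (eq_xw j); rewrite !ffunE => /addbI.
Qed.

Definition nbr_parity n (G : graph n) (w : bvec n) (j : 'I_n) : bool :=
  \big[addb/false]_i (G (j, i) && w i).

Section QuadraticForm.

Variables (n : nat) (G : graph n).
Hypothesis G_simple : simple_graph G.

Lemma bool_fun_addbv (x w : bvec n) :
  bool_fun G (addbv x w) =
  bool_fun G x (+) bool_fun G w (+) \big[addb/false]_j (x j && nbr_parity G w j).
Proof.
have pair_eq i j : [&& G (i, j), addbv x w i & addbv x w j] =
    [&& G (i, j), x i & x j] (+) [&& G (i, j), w i & w j] (+)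
    ([&& x i, G (i, j) & w j] (+) [&& x j, G (j, i) & w i]).
  rewrite !ffunE (proj2 (G_simple j i)).
  by case: (G (i, j)); case: (x i); case: (x j); case: (w i); case: (w j).
rewrite /bool_fun (eq_bigr _ (fun i _ => eq_bigr _ (fun j _ => pair_eq i j))).
rewrite (eq_bigr _ (fun i _ => big_split _ _ _ _ _)) big_split /=.
rewrite (eq_bigr _ (fun i _ => big_split _ _ _ _ _)) big_split /=.
rewrite big_lt_pairs => [|i]; last by rewrite (proj1 (G_simple i i)) andbF.
congr (_ (+) _); apply: eq_bigr => i _; rewrite /nbr_parity.
by case: (x i) => //=; rewrite big1.
Qed.

Lemma sign_bool_fun_addbv (x w : bvec n) :
  (-1) ^+ bool_fun G x * (-1) ^+ bool_fun G (addbv x w) =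
  (-1) ^+ bool_fun G w * \prod_j (-1) ^+ (x j && nbr_parity G w j) :> algC.
Proof.
have sign_big (r : seq 'I_n) (F : 'I_n -> bool) :
    (-1) ^+ (\big[addb/false]_(j <- r) F j) = \prod_(j <- r) (-1) ^+ F j :> algC.
  by apply: (big_morph (fun b : bool => (-1) ^+ b)) => [b b'|]; rewrite ?signr_addb.
rewrite bool_fun_addbv !signr_addb (sign_big _ (fun j => x j && nbr_parity G w j)).
by rewrite !mulrA -expr2 sqrr_sign mul1r.
Qed.

End QuadraticForm.

Section Spectrum.

Variable n : nat.
Implicit Types (U : {ffun 'I_n -> 'I_3}) (k w x : bvec n).

Definition tensor_entry U k x : algC := \prod_j gate_entry (U j) (k j) (x j).

Lemma sqr_norm_transform (f : bvec n -> bool) U k :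
  2 ^+ n * `|transform f U k| ^+ 2 =
  \sum_w \sum_x tensor_entry U k x * (tensor_entry U k (addbv x w))^* *
                ((-1) ^+ f x * (-1) ^+ f (addbv x w)).
Proof.
set c : algC := (sqrtC 2 ^+ n)^-1.
have c_conj : c^* = c.
  by apply/conj_Creal/ger0_real; rewrite invr_ge0 exprn_ge0 ?sqrtC_ge0 ?ler0n.
have c_sqr : 2 ^+ n * (c * c) = 1.
  by rewrite -invfM -exprMn -expr2 sqrtCK mulfV // expf_neq0 // pnatr_eq0.
have regroup (A B C D : algC) :
    2 ^+ n * (A * (c * B) * (C * (c * D))) = A * C * (B * D) * (2 ^+ n * (c * c)).
  by ring.
rewrite normCK /transform /svec -/c rmorph_sum mulr_suml [RHS]exchange_big mulr_sumr /=.
apply: eq_bigr => x _; rewrite !mulr_sumr (reindex_inj (@addbv_inj _ x)) /=.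
apply: eq_bigr => w _.
by rewrite !conjCM c_conj rmorph_sign regroup c_sqr mulr1.
Qed.

Lemma sum_tensor_corr U k w (t : 'I_n -> bool) :
  \sum_x tensor_entry U k x * (tensor_entry U k (addbv x w))^* * \prod_j (-1) ^+ (x j && t j)
  = \prod_j gate_corr (U j) (k j) (w j) (t j).
Proof.
rewrite [RHS](eq_bigr _ (fun j _ => esym (gate_corrE _ _ _ _))) bigA_distr_bigA /=.
apply: eq_bigr => x _; rewrite /tensor_entry rmorph_prod -!big_split /=.
by apply: eq_bigr => j _; rewrite ffunE.
Qed.

End Spectrum.

Section GraphSpectrum.

Variables (n : nat) (G : graph n).
Hypothesis G_simple : simple_graph G.
Implicit Types (U : {ffun 'I_n -> 'I_3}) (k w : bvec n).

Definition spectrum U k : algC :=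
  \sum_w (-1) ^+ bool_fun G w * \prod_j gate_corr (U j) (k j) (w j) (nbr_parity G w j).

Definition stab_set U : {set bvec n} :=
  [set w : bvec n | [forall j, gate_stab (U j) (w j) (nbr_parity G w j)]].

Lemma spectrumE U k : 2 ^+ n * `|transform (bool_fun G) U k| ^+ 2 = spectrum U k.
Proof.
rewrite sqr_norm_transform; apply: eq_bigr => w _.
under [LHS]eq_bigr => x _ do rewrite sign_bool_fun_addbv // mulrCA.
by rewrite -mulr_sumr sum_tensor_corr.
Qed.

Lemma spectrum_ge0 U k : 0 <= spectrum U k.
Proof. by rewrite -spectrumE mulr_ge0 ?exprn_ge0 ?ler0n. Qed.

Lemma spectrum_le U k : spectrum U k <= #|stab_set U|%:R.
Proof.
rewrite -(ger0_norm (spectrum_ge0 U k)) -sum_natr_mem.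
apply: le_trans (ler_norm_sum _ _ _) _; apply: ler_sum => w _.
rewrite normrMsign normr_prod (eq_bigr _ (fun j _ => norm_gate_corr _ _ _ _)).
by rewrite prod_natr_bool inE.
Qed.

Lemma prod_two_natr_bool (c : 'I_n -> bool) :
  \prod_j (2 * ((c j)%:R : algC)) = 2 ^+ n * ([forall j, c j])%:R.
Proof. by rewrite big_split /= prod_natr_bool prodr_const card_ord. Qed.

Lemma sum_spectrum U : \sum_k spectrum U k = 2 ^+ n.
Proof.
pose w0 : bvec n := [ffun => false].
have bool_fun0 : bool_fun G w0 = false.
  by rewrite /bool_fun big1 // => i _; rewrite big1 // => j _; rewrite /w0 !ffunE !andbF.
have nbr_parity0 j : nbr_parity G w0 j = false.
  by rewrite /nbr_parity big1 // => i _; rewrite /w0 ffunE andbF.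
rewrite exchange_big /=.
under eq_bigr => w _ do rewrite -mulr_sumr -(bigA_distr_bigA
    (fun j r => gate_corr (U j) r (w j) (nbr_parity G w j))) /=.
under eq_bigr => w _ do rewrite (eq_bigr _ (fun j _ => sum_gate_corr _ _ _)) prod_two_natr_bool.
rewrite (bigD1 w0) //= big1 ?addr0 => [|w w_neq0].
  rewrite bool_fun0 mul1r (_ : [forall j, _] = true) ?mulr1 //.
  by apply/forallP => j; rewrite nbr_parity0 ffunE.
case: forallP => [w_zero|]; last by rewrite !mulr0.
by case/eqP: w_neq0; apply/ffunP => j; rewrite ffunE; case/andP: (w_zero j) => /negbTE.
Qed.

Lemma sum_sqr_spectrum U : \sum_k spectrum U k ^+ 2 = #|stab_set U|%:R * 2 ^+ n.
Proof.
pose term w k := (-1) ^+ bool_fun G w * \prod_j gate_corr (U j) (k j) (w j) (nbr_parity G w j).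
have term_corr w w' : \sum_k term w k * (term w' k)^* =
    (-1) ^+ bool_fun G w * (-1) ^+ bool_fun G w' * (2 ^+ n * [forall j,
      [&& w j == w' j, nbr_parity G w j == nbr_parity G w' j
        & gate_stab (U j) (w j) (nbr_parity G w j)]]%:R).
  rewrite -prod_two_natr_bool.
  under [in RHS]eq_bigr do rewrite -gate_corr_orth.
  rewrite bigA_distr_bigA mulr_sumr; apply: eq_bigr => k _.
  rewrite /term conjCM rmorph_sign rmorph_prod.
  rewrite big_split /=; ring.
rewrite (eq_bigr (fun k => \sum_w \sum_w' term w k * (term w' k)^*)) => [|k _]; last first.
  rewrite expr2 -{2}(conj_Creal (ger0_real (spectrum_ge0 U k))) rmorph_sum mulr_suml.
  by apply: eq_bigr => w _; rewrite mulr_sumr.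
rewrite exchange_big -sum_natr_mem mulr_suml /=; apply: eq_bigr => w _.
rewrite exchange_big (bigD1 w) //= [X in _ + X]big1 ?addr0 => [|w' w'_neq].
  rewrite term_corr -expr2 sqrr_sign mul1r inE mulrC.
  by congr ((nat_of_bool _)%:R * _); apply: eq_forallb => j; rewrite !eqxx.
rewrite term_corr; case: forallP => [w_eq|]; last by rewrite !mulr0.
by case/eqP: w'_neq; apply/ffunP => j; case/and3P: (w_eq j) => /eqP.
Qed.

Lemma max_sqr_norm_transform U :
  \big[Num.max/0]_k `|transform (bool_fun G) U k| ^+ 2 = #|stab_set U|%:R / 2 ^+ n.
Proof.
have two_n_gt0 : (0 : algC) < 2 ^+ n by rewrite exprn_gt0 ?ltr0n.
have sqr_normE k : `|transform (bool_fun G) U k| ^+ 2 = spectrum U k / 2 ^+ n.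
  by rewrite -spectrumE mulrAC divff ?mul1r ?lt0r_neq0.
have spectrum_bnd k : 0 <= spectrum U k <= #|stab_set U|%:R.
  by rewrite spectrum_ge0 spectrum_le.
have sum_neq0 : \sum_k spectrum U k != 0 by rewrite sum_spectrum lt0r_neq0.
have moment2 : \sum_k spectrum U k ^+ 2 = #|stab_set U|%:R * \sum_k spectrum U k.
  by rewrite sum_spectrum sum_sqr_spectrum.
have [k spectrum_k] := exists_eq_ub_of_moments spectrum_bnd sum_neq0 moment2.
rewrite (eq_bigr _ (fun k _ => sqr_normE k)); apply: bigmax_nonneg_eq => [k'|].
  by rewrite (divr_ge0 (spectrum_ge0 U k') (ltW two_n_gt0)) ler_pM2r ?invr_gt0 ?spectrum_le.
by exists k; rewrite spectrum_k.
Qed.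

Definition max_stab : nat := \max_U #|stab_set U|.

Lemma PAR_IHN_max_stab : PAR_IHN (bool_fun G) = max_stab%:R.
Proof.
have two_n_gt0 : (0 : algC) < 2 ^+ n by rewrite exprn_gt0 ?ltr0n.
rewrite /PAR_IHN (eq_bigr _ (fun U _ => max_sqr_norm_transform U)).
rewrite (@bigmax_nonneg_eq _ _ _ (max_stab%:R / 2 ^+ n)) => [|U|].
- by rewrite mulrC divfK ?lt0r_neq0.
- rewrite (divr_ge0 (ler0n _ _) (ltW two_n_gt0)) ler_pM2r ?invr_gt0 //.
  by rewrite ler_nat leq_bigmax.
- have [|U0 max_U0] := bigop.eq_bigmax (fun U => #|stab_set U|).
    by apply/card_gt0P; exists [ffun => gI].
  by exists U0; rewrite /max_stab max_U0.
Qed.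

End GraphSpectrum.

Lemma simple_graph_lc n (G : graph n) v : simple_graph G -> simple_graph (lc G v).
Proof.
move=> G_simple i j; rewrite !ffunE /= eqxx /= (proj1 (G_simple i i)); split=> //.
by rewrite eq_sym (proj2 (G_simple i j)) [G (v, i) && _]andbC.
Qed.

Lemma lcK n (G : graph n) v : simple_graph G -> lc (lc G v) v = G.
Proof.
move=> G_simple; apply/ffunP => -[i j]; rewrite !ffunE /= (proj1 (G_simple v v)) /= !andbF.
by case: [&& i != j, G (v, i) & G (v, j)]; rewrite ?negbK.
Qed.

Definition swapIN (u : 'I_3) : 'I_3 := match val u with 0%N => gN | 1%N => gH | _ => gI end.
Definition swapHN (u : 'I_3) : 'I_3 := match val u with 0%N => gI | 1%N => gN | _ => gH end.

Section LocalComplementation.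

Variables (n : nat) (G : graph n) (v : 'I_n).
Hypothesis G_simple : simple_graph G.
Implicit Types (U : {ffun 'I_n -> 'I_3}) (w : bvec n).

(* The change of variables induced by local complementation at v: it exchanges
   the constraints of I and N at v, and those of H and N at the neighbours of v. *)
Definition lc_shift w : bvec n := [ffun i => w i (+) ((i == v) && nbr_parity G w v)].

Definition lc_gates U : {ffun 'I_n -> 'I_3} :=
  [ffun j => if j == v then swapIN (U j) else if G (v, j) then swapHN (U j) else U j].

Lemma nbr_parity_lc_shift w : nbr_parity G (lc_shift w) v = nbr_parity G w v.
Proof.
apply: eq_bigr => i _; rewrite ffunE.
by case: (eqVneq i v) => [->|_]; rewrite ?(proj1 (G_simple v v)) ?addbF.
Qed.

Lemma lc_shiftK : involutive lc_shift.
Proof.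
by move=> w; apply/ffunP => i; rewrite ffunE nbr_parity_lc_shift ffunE -addbA addbb addbF.
Qed.

Lemma nbr_parity_lc w j :
  nbr_parity (lc G v) (lc_shift w) j = nbr_parity G w j (+) (G (v, j) && w j).
Proof.
set T := nbr_parity G w v.
have split_term i : lc G v (j, i) && lc_shift w i =
   (G (j, i) && w i) (+) [&& G (j, i), i == v & T]
     (+) (G (v, j) && ((j != i) && (G (v, i) && w i))).
  rewrite !ffunE /= -/T.
  case: (eqVneq i v) => [->|nv] /=; rewrite ?(proj1 (G_simple v v)) ?andbF ?addbF /=.
    by case: (G (j, v)); case: (w v); case: T; case: (j != v).
  by case: (G (j, i)); case: (w i); case: (G (v, i)); case: (G (v, j)); case: (j != i).
rewrite /nbr_parity (eq_bigr _ (fun i _ => split_term i)) !big_split /=.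
rewrite -andb_big_addb big_addb_neq -/(nbr_parity G w v) -/T.
have -> : \big[addb/false]_i [&& G (j, i), i == v & T] = G (v, j) && T.
  rewrite (bigD1 v) //= eqxx /= big1 ?addbF ?(proj2 (G_simple j v)) // => i /negbTE ->.
  by rewrite andbF.
by clear split_term; case: (G (v, j)); case: T; case: (w j); case: (\big[addb/false]_i (G (j, i) && w i)).
Qed.

Lemma gate_stab_lc U w j :
  gate_stab (lc_gates U j) (lc_shift w j) (nbr_parity (lc G v) (lc_shift w) j) =
  gate_stab (U j) (w j) (nbr_parity G w j).
Proof.
rewrite nbr_parity_lc !ffunE.
case: (eqVneq j v) => [->|_] /=.
  rewrite (proj1 (G_simple v v)) /= addbF /swapIN /gate_stab.
  by case: (U v) => [[|[|[|m]]] Hm] //=; case: (w v); case: (nbr_parity G w v).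
rewrite addbF; case: (G (v, j)) => /=; rewrite ?addbF // /swapHN /gate_stab.
by case: (U j) => [[|[|[|m]]] Hm] //=; case: (w j); case: (nbr_parity G w j).
Qed.

Lemma card_stab_set_lc U : #|stab_set (lc G v) (lc_gates U)| = #|stab_set G U|.
Proof.
have -> : stab_set G U = lc_shift @^-1: stab_set (lc G v) (lc_gates U).
  by apply/setP => w; rewrite !inE; apply: eq_forallb => j; rewrite gate_stab_lc.
by rewrite card_preimset //; apply: (can_inj lc_shiftK).
Qed.

End LocalComplementation.

Lemma max_stab_le_lc n (G : graph n) v :
  simple_graph G -> (max_stab G <= max_stab (lc G v))%N.
Proof.
move=> G_simple; apply/bigmax_leqP => U _.
by rewrite -(card_stab_set_lc v G_simple); apply: leq_bigmax.
Qed.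

Lemma max_stab_lc n (G : graph n) v : simple_graph G -> max_stab (lc G v) = max_stab G.
Proof.
move=> G_simple; apply/eqP; rewrite eqn_leq max_stab_le_lc // andbT.
by rewrite -{2}(lcK v G_simple) max_stab_le_lc // => i j; apply: simple_graph_lc.
Qed.

Lemma lc_orbit_ind n (P : graph n -> Prop) (G H : graph n) :
  (forall G' v, P G' -> P (lc G' v)) -> in_lc_orbit G H -> P G -> P H.
Proof.
move=> P_lc /connectP[p]; elim: p G => [|H' p IH] G /=; first by move=> _ ->.
by case/andP=> /existsP[v /eqP ->] path_p H_last PG; apply: IH path_p H_last (P_lc _ _ PG).
Qed.

Lemma simple_graph_lc_orbit n (G H : graph n) :
  in_lc_orbit G H -> simple_graph G -> simple_graph H.
Proof. exact: lc_orbit_ind (@simple_graph_lc n). Qed.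

Lemma max_stab_lc_orbit n (G H : graph n) :
  in_lc_orbit G H -> simple_graph G -> max_stab H = max_stab G.
Proof.
move=> orbit_H G_simple.
pose P (H' : graph n) := simple_graph H' /\ max_stab H' = max_stab G.
suff [] : P H by [].
apply: (@lc_orbit_ind _ P G) => // G' v [G'_simple max_G'].
by split; [exact: simple_graph_lc | rewrite max_stab_lc].
Qed.

Lemma in_lc_orbit_lc n (G H : graph n) v : in_lc_orbit G H -> in_lc_orbit G (lc H v).
Proof. by move=> orbit_H; apply: connect_trans orbit_H (connect1 _); apply/existsP; exists v. Qed.

Local Close Scope ring_scope.

Definition gate_support n (U : {ffun 'I_n -> 'I_3}) : {set 'I_n} := [set j | U j != gI].

Lemma card_bvec_supported n (S : {set 'I_n}) :
  #|[set w : bvec n | [forall j, (j \notin S) ==> ~~ w j]]| = 2 ^ #|S|.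
Proof.
rewrite -card_bool -(card_pffun_on false S {: bool}); apply: eq_card => w.
rewrite inE; apply/forallP/familyP => w_supp j; move: (w_supp j);
  by case: (j \in S) => //=; case: (w j).
Qed.

Lemma card_stab_set_le n (G : graph n) U : #|stab_set G U| <= 2 ^ #|gate_support U|.
Proof.
rewrite -card_bvec_supported; apply/subset_leq_card/subsetP => w.
rewrite !inE => /forallP w_stab; apply/forallP => j; move: (w_stab j).
by rewrite inE negbK /gate_stab; case: (U j) => -[|[|[|m]]] Hm //= _ /eqP ->.
Qed.

Lemma card_stab_set_indep n (G : graph n) S : independent G S ->
  2 ^ #|S| <= #|stab_set G [ffun j => if j \in S then gH else gI]|.
Proof.
move=> S_indep; rewrite -card_bvec_supported; apply/subset_leq_card/subsetP => w.
rewrite !inE => /forallP w_supp; apply/forallP => j; rewrite ffunE.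
case jS: (j \in S); rewrite /gate_stab /=; last by move: (w_supp j); rewrite jS.
rewrite /nbr_parity big1 // => i _; case iS: (i \in S).
  by move/forallP/(_ j): S_indep; rewrite jS => /forallP/(_ i); rewrite iS => /negbTE ->.
by move: (w_supp i); rewrite iS => /negbTE ->; rewrite andbF.
Qed.

Lemma alpha_le_lambda n (G H : graph n) S :
  in_lc_orbit G H -> independent H S -> #|S| <= lambda G.
Proof.
move=> orbit_H S_indep; apply: leq_trans (leq_bigmax_cond _ orbit_H).
exact: (leq_bigmax_cond (F := fun S : {set _} => #|S|) S S_indep).
Qed.

Lemma swapHN_supp u : (swapHN u != gI) = (u != gI).
Proof. by case: u => -[|[|[|m]]]. Qed.

Section SupportUnderLC.

Variables (n : nat) (G : graph n) (v : 'I_n) (U : {ffun 'I_n -> 'I_3}).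

Lemma gate_support_lc_N : U v = gN -> gate_support (lc_gates G v U) = gate_support U :\ v.
Proof.
move=> Uv; apply/setP => j; rewrite !inE !ffunE.
case: (eqVneq j v) => [->|_] /=; first by rewrite Uv.
by case: (G (v, j)); rewrite ?swapHN_supp.
Qed.

Lemma gate_support_lc_H : U v = gH -> gate_support (lc_gates G v U) = gate_support U.
Proof.
move=> Uv; apply/setP => j; rewrite !inE !ffunE.
case: (eqVneq j v) => [->|_] /=; first by rewrite Uv.
by case: (G (v, j)); rewrite ?swapHN_supp.
Qed.

Lemma lc_gates_nbr j : j != v -> G (v, j) -> U j = gH -> lc_gates G v U j = gN.
Proof. by move=> /negbTE jv Gvj Uj; rewrite ffunE jv Gvj Uj. Qed.

End SupportUnderLC.

Lemma card_stab_set_le_lambda n (G H : graph n) U :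
  simple_graph G -> in_lc_orbit G H -> #|stab_set H U| <= 2 ^ lambda G.
Proof.
move=> G_simple.
suff bound m : forall H U, in_lc_orbit G H -> #|gate_support U| = m ->
    #|stab_set H U| <= 2 ^ lambda G by move=> orbit_H; apply: bound orbit_H (erefl _).
(* LC at a vertex carrying N turns it into I; if both ends of an edge of the
   support carry H, LC at one end turns the other into N. *)
elim/ltn_ind: m => m IH {}H {}U orbit_H supp_U.
have H_simple := simple_graph_lc_orbit orbit_H G_simple.
have [indep|] := boolP (independent H (gate_support U)).
  apply: leq_trans (card_stab_set_le _ _) _; rewrite leq_exp2l //.
  exact: alpha_le_lambda orbit_H indep.
have via_N H' U' v : in_lc_orbit G H' -> #|gate_support U'| = m -> U' v = gN ->
    #|stab_set H' U'| <= 2 ^ lambda G.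
  move=> orbit_H' supp_U' U'v.
  have H'_simple := simple_graph_lc_orbit orbit_H' G_simple.
  rewrite -(card_stab_set_lc v H'_simple U').
  apply: (IH _ _ _ _ (in_lc_orbit_lc v orbit_H') (erefl _)).
  by rewrite gate_support_lc_N // -supp_U' (cardsD1 v (gate_support U')) inE U'v.
case/forallPn => i; rewrite negb_imply => /andP[i_supp /forallPn[j]].
rewrite negb_imply negbK => /andP[j_supp Gij].
have ji : j != i by apply: contraTneq Gij => ->; rewrite (proj1 (H_simple i i)).
rewrite !inE in i_supp j_supp.
case: (gateP (U i)) => Ui; rewrite Ui in i_supp => //; last exact: via_N _ _ _ orbit_H supp_U Ui.
case: (gateP (U j)) => Uj; rewrite Uj in j_supp => //; last exact: via_N _ _ _ orbit_H supp_U Uj.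
rewrite -(card_stab_set_lc j H_simple U).
apply: (via_N _ _ i (in_lc_orbit_lc j orbit_H)); first by rewrite gate_support_lc_H.
apply: lc_gates_nbr => //; first by rewrite eq_sym.
by rewrite -(proj2 (H_simple i j)).
Qed.

Lemma max_stab_eq_lambda n (G : graph n) : simple_graph G -> max_stab G = 2 ^ lambda G.
Proof.
move=> G_simple; apply/eqP; rewrite eqn_leq; apply/andP; split.
  by apply/bigmax_leqP => U _; apply: card_stab_set_le_lambda (connect0 _ _).
have [H orbit_H ->] : {H | in_lc_orbit G H & lambda G = alpha H}.
  by apply: eq_bigmax_cond; apply/card_gt0P; exists G; apply: connect0.
have [S S_indep ->] : {S | independent H S & alpha H = #|S|}.
  by apply: eq_bigmax_cond; apply/card_gt0P; exists set0; apply/forallP => i; rewrite inE.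
rewrite -(max_stab_lc_orbit orbit_H G_simple).
exact: leq_trans (card_stab_set_indep S_indep) (leq_bigmax _).
Qed.

Local Open Scope ring_scope.

Theorem mainTheorem5 (n : nat) (G : graph n) :
  simple_graph G ->
  (forall H : graph n, in_lc_orbit G H ->
     PAR_IHN (bool_fun H) = 2 ^+ lambda G) /\
  PAR_IHN (bool_fun G) = 2 ^+ lambda G.
Proof.
move=> G_simple.
have PAR_orbit H : in_lc_orbit G H -> PAR_IHN (bool_fun H) = 2 ^+ lambda G.
  move=> orbit_H; have H_simple := simple_graph_lc_orbit orbit_H G_simple.
  rewrite PAR_IHN_max_stab // (max_stab_lc_orbit orbit_H G_simple).
  by rewrite max_stab_eq_lambda // natrX.
by split=> //; apply: PAR_orbit; apply: connect0.
Qed.
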